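(* (i) For every $r\ge 2$ there exist jointly distributed binary random variables $V_1,\dots,V_r$ for which $R^{s.c.}_{SW} > R_{SW}$ (for instance $V_1=V_2=\dots=V_r$ with $H(V_1)>0$, for which $R_{SW}=H(V_1)/r$ while $R^{s.c.}_{SW}=H(V_1)$). (ii) For every joint distribution $p(v_1,\dots,v_r)$ of binary random variables, $$R^{s.c.}_{SW}\le \min\Big(r\,R_{SW},\ \max_{1\le i\le r} H(V_i)\Big).$$
   Context: Let $V_1,\dots,V_r$ be jointly distributed binary random variables with joint law $p(v_1,\dots,v_r)$, and for each $n$ let $(V_1[t],\dots,V_r[t])$, $t=1,\dots,n$, be i.i.d. copies; write $V_i^n$ for the column vector $(V_i[1],\dots,V_i[n])^t\in\mathbb{F}_2^n$. A rate $R\ge 0$ is achievable with a common compression matrix if for every $\epsilon>0$ and all sufficiently large $n$ there exist a single binary matrix $B$ of size $\lceil nR\rceil\times n$ and a decoding map $g$ such that $\Pr\big[g(BV_1^n,\dots,BV_r^n)\neq (V_1^n,\dots,V_r^n)\big]\le\epsilon$, where the products $BV_i^n$ are computed over $\mathbb{F}_2$. $R^{s.c.}_{SW}$ denotes the infimum of all rates achievable with a common compression matrix. $R_{SW}$ denotes the minimum $R$ such that the symmetric rate tuple $(R,\dots,R)$ lies in the Slepian–Wolf region of $(V_1,\dots,V_r)$, i.e. the minimum $R$ with $|S|\,R\ge H(V_S\mid V_{S^c})$ for every nonempty $S\subseteq\{1,\dots,r\}$ (here $V_S=(V_i)_{i\in S}$). $H(\cdot)$ denotes Shannon entropy in bits.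 *)

From HB Require Import structures.
From mathcomp Require Import all_boot all_order all_algebra.
From Stdlib Require Import Reals.

Set Implicit Arguments.
Unset Strict Implicit.
Unset Printing Implicit Defensive.

Local Open Scope R_scope.

(* Outcome of one draw of (V_1,...,V_r): a function 'I_r -> bool. *)
Definition Omega (r : nat) := {ffun 'I_r -> bool}.

Definition is_distr (T : finType) (p : T -> R) : Prop :=
  (forall x, 0 <= p x) /\ \big[Rplus/R0]_(x : T) p x = 1.

Definition prob (T : finType) (p : T -> R) (E : pred T) : R :=
  \big[Rplus/R0]_(x : T | E x) p x.

Definition log2 (x : R) : R := ln x / ln 2.

Definition xlog2 (x : R) : R := if Rlt_dec 0 x then x * log2 x else 0.

Definition entropy (T U : finType) (p : T -> R) (X : T -> U) : R :=
  - \big[Rplus/R0]_(u : U) xlog2 (prob p (fun w => X w == u)).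

Definition cond_entropy (T U W : finType) (p : T -> R) (X : T -> U) (Y : T -> W) : R :=
  - \big[Rplus/R0]_(u : U) \big[Rplus/R0]_(y : W)
      (let pxy := prob p (fun w => (X w == u) && (Y w == y)) in
       let py := prob p (fun w => Y w == y) in
       if Rlt_dec 0 pxy then pxy * log2 (pxy / py) else 0).

Definition Vi (r : nat) (i : 'I_r) (v : Omega r) : bool := v i.

(* V_S = (V_i)_{i in S}, encoded as the outcome masked outside S. *)
Definition VS (r : nat) (S : {set 'I_r}) (v : Omega r) : Omega r :=
  [ffun i => if i \in S then v i else false].

(* R_SW: minimal R with |S| R >= H(V_S | V_{S^c}) for all nonempty S,
   i.e. the maximum over nonempty S of H(V_S|V_{S^c}) / |S| (all these are >= 0). *)
Definition R_SW (r : nat) (p : Omega r -> R) : R :=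
  \big[Rmax/R0]_(S : {set 'I_r} | S != set0)
     (cond_entropy p (VS S) (VS (~: S)) / INR #|S|).

(* ceiling of a real, as a natural number (for nonnegative arguments) *)
Definition ceil_nat (x : R) : nat := Z.to_nat (- Int_part (- x)).

(* n i.i.d. draws *)
Definition Sample (r n : nat) := {ffun 'I_n -> Omega r}.

Definition prob_n (r n : nat) (p : Omega r -> R) (w : Sample r n) : R :=
  \big[Rmult/R1]_(t : 'I_n) p (w t).

Section B2F.
Local Open Scope ring_scope.
Definition b2F (b : bool) : 'F_2 := if b then 1 else 0.
End B2F.

Definition Vn (r n : nat) (w : Sample r n) (i : 'I_r) : 'cV['F_2]_n :=
  \col_(t < n) b2F (w t i).

Definition all_Vn (r n : nat) (w : Sample r n) : {ffun 'I_r -> 'cV['F_2]_n} :=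
  [ffun i => Vn w i].

Definition encode (r n m : nat) (B : 'M['F_2]_(m, n)) (w : Sample r n)
  : {ffun 'I_r -> 'cV['F_2]_m} :=
  [ffun i => mulmx B (Vn w i)].

Definition error_prob (r n m : nat) (p : Omega r -> R) (B : 'M['F_2]_(m, n))
  (g : {ffun 'I_r -> 'cV['F_2]_m} -> {ffun 'I_r -> 'cV['F_2]_n}) : R :=
  prob (prob_n p) (fun w => g (encode B w) != all_Vn w).

Definition achievable_sc (r : nat) (p : Omega r -> R) (Rt : R) : Prop :=
  0 <= Rt /\
  forall eps, 0 < eps ->
    exists N : nat, forall n : nat, (N <= n)%nat ->
      exists (B : 'M['F_2]_(ceil_nat (INR n * Rt), n))
             (g : {ffun 'I_r -> 'cV['F_2]_(ceil_nat (INR n * Rt))} ->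
                  {ffun 'I_r -> 'cV['F_2]_n}),
        error_prob p B g <= eps.

Definition is_inf (E : R -> Prop) (m : R) : Prop :=
  (forall x, E x -> m <= x) /\
  (forall m', (forall x, E x -> m' <= x) -> m' <= m).

(* Any rate [R > max_i H(V_i)] is achievable with one
   matrix [B] used for all sources, each bin [B V_i^n] being decoded on its
   own: the decoder returns a sequence of probability above [2 ^ (- n g)]
   in that bin, where [max_i H(V_i) < g < R].  Averaged over all matrices
   (random linear binning), the error is at most the mass of the improbable
   sequences plus [2 ^ (n g - m)] for the probable ones colliding with the
   truth; a Chernoff bound with a moment [sum_x Q(x) ^ b], [b < 1], makes
   the first term exponentially small, because the derivative in [b] of
   [sum_x Q(x) ^ b] at [b = 1] is [- ln 2 * H(Q)].  Hence
   [R^sc <= max_i H(V_i) <= H(V_1 ... V_r) <= r R_SW].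

   If [V_1 = ... = V_r] almost surely, all bins coincide, so a
   decoder is right on at most [2 ^ m] samples of positive probability; a
   Chernoff bound of order [a > 1] then shows that rates below [H(V_1)] are
   not achievable, so [R^sc = H(V_1)], whereas only the term [S = {1..r}]
   of [R_SW] survives: [R_SW = H(V_1) / r].  A fair bit copied [r] times
   is such a source. *)

From HB Require Import structures.
From mathcomp Require Import all_boot all_order all_algebra.
From Stdlib Require Import Reals Lra ZArith Classical FunctionalExtensionality.
Set Implicit Arguments.
Unset Strict Implicit.
Unset Printing Implicit Defensive.

Local Open Scope R_scope.

(* Addition and multiplication of reals as monoid laws, so that the bigop
   library applies to [\big[Rplus/R0]] and [\big[Rmult/R1]]. *)
Lemma Rplus_associative : associative Rplus. Proof. by move=> x y z; ring. Qed.
Lemma Rmult_associative : associative Rmult. Proof. by move=> x y z; ring. Qed.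
Lemma Rmult_left_zero : left_zero R0 Rmult. Proof. by move=> x; ring. Qed.
Lemma Rmult_right_zero : right_zero R0 Rmult. Proof. by move=> x; ring. Qed.
Lemma Rmult_distr_l : left_distributive Rmult Rplus. Proof. by move=> x y z; ring. Qed.
Lemma Rmult_distr_r : right_distributive Rmult Rplus. Proof. by move=> x y z; ring. Qed.
HB.instance Definition _ :=
  Monoid.isComLaw.Build R R0 Rplus Rplus_associative Rplus_comm Rplus_0_l.
HB.instance Definition _ :=
  Monoid.isComLaw.Build R R1 Rmult Rmult_associative Rmult_comm Rmult_1_l.
HB.instance Definition _ := Monoid.isMulLaw.Build R R0 Rmult Rmult_left_zero Rmult_right_zero.
HB.instance Definition _ := Monoid.isAddLaw.Build R Rmult Rplus Rmult_distr_l Rmult_distr_r.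

(** * Finite sums, maxima and probabilities *)

Lemma sumR_le (I : finType) (P : pred I) (F G : I -> R) :
  (forall i, P i -> F i <= G i) ->
  \big[Rplus/R0]_(i | P i) F i <= \big[Rplus/R0]_(i | P i) G i.
Proof.
move=> FG; apply: (big_ind2 (fun x y => x <= y)) => //; first lra.
by move=> *; apply: Rplus_le_compat.
Qed.

Lemma sumR_ge0 (I : finType) (P : pred I) (F : I -> R) :
  (forall i, P i -> 0 <= F i) -> 0 <= \big[Rplus/R0]_(i | P i) F i.
Proof.
move=> F0; apply: (big_ind (fun x => 0 <= x)) => //; first lra.
by move=> *; lra.
Qed.

Lemma sumR_le_sub (I : finType) (P Q : pred I) (F : I -> R) :
  (forall i, 0 <= F i) -> (forall i, P i -> Q i) ->
  \big[Rplus/R0]_(i | P i) F i <= \big[Rplus/R0]_(i | Q i) F i.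
Proof.
move=> F0 PQ; rewrite big_mkcond [X in _ <= X]big_mkcond; apply: sumR_le => i _.
case: (boolP (P i)) => Pi; first by rewrite (PQ _ Pi); lra.
by case: (Q i); [apply: F0 | lra].
Qed.

Lemma Rle_add_nonneg (a b c : R) : 0 <= c -> a <= b -> a <= b + c.
Proof. by move=> *; lra. Qed.

Lemma sumR_ge_term (I : finType) (F : I -> R) (i0 : I) :
  (forall i, 0 <= F i) -> F i0 <= \big[Rplus/R0]_i F i.
Proof.
move=> F0; rewrite (bigD1 i0) //= -[X in X <= _]Rplus_0_r.
by apply: Rplus_le_compat_l; apply: sumR_ge0.
Qed.

Lemma sumR_const (I : finType) (A : {pred I}) (c : R) :
  \big[Rplus/R0]_(i in A) c = INR #|A| * c.
Proof. by rewrite big_const; elim: #|A| => [|k IH]; rewrite ?iterS ?S_INR ?IH /=; ring. Qed.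

Lemma sumR_constT (I : finType) (c : R) : \big[Rplus/R0]_(i : I) c = INR #|I| * c.
Proof. by rewrite -sumR_const; apply: eq_bigl. Qed.

Lemma exists_le_average (I : finType) (F : I -> R) (i0 : I) (c : R) :
  \big[Rplus/R0]_i F i <= INR #|I| * c -> exists i, F i <= c.
Proof.
move=> Hsum; apply: NNPP => Hnone.
have Hgt i : c < F i by apply: Rnot_le_lt => Fi; apply: Hnone; exists i.
have : INR #|I| * c < \big[Rplus/R0]_i F i; last lra.
rewrite -sumR_constT (bigD1 i0) //= [X in _ < X](bigD1 i0) //=.
apply: Rplus_lt_le_compat; first exact: Hgt.
by apply: sumR_le => i _; apply: Rlt_le.
Qed.

(* Finite maxima of reals, with the convention that the empty maximum is 0. *)
Lemma bigmax_ge0 (I : finType) (P : pred I) (F : I -> R) :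
  0 <= \big[Rmax/R0]_(i | P i) F i.
Proof. by apply: (big_rec (fun x => 0 <= x)) => [|i x _ hx]; [lra | apply: Rle_trans hx (Rmax_r _ _)]. Qed.

Lemma bigmax_le (I : finType) (P : pred I) (F : I -> R) (M : R) : 0 <= M ->
  (forall i, P i -> F i <= M) -> \big[Rmax/R0]_(i | P i) F i <= M.
Proof. by move=> M0 FM; apply: (big_ind (fun x => x <= M)) => // x y; apply: Rmax_lub. Qed.

Lemma bigmax_lt (I : finType) (P : pred I) (F : I -> R) (M : R) : 0 < M ->
  (forall i, P i -> F i < M) -> \big[Rmax/R0]_(i | P i) F i < M.
Proof. by move=> M0 FM; apply: (big_ind (fun x => x < M)) => // x y; apply: Rmax_lub_lt. Qed.

Lemma le_bigmax (I : finType) (P : pred I) (F : I -> R) (i0 : I) : P i0 ->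
  F i0 <= \big[Rmax/R0]_(i | P i) F i.
Proof.
move=> Pi0; rewrite unlock /reducebig.
have : i0 \in index_enum I by rewrite mem_index_enum.
elim: (index_enum I) => [|a s IH] //=; rewrite in_cons => /orP [/eqP <-|i0s].
  by rewrite Pi0; apply: Rmax_l.
by case: (P a); [apply: Rle_trans (IH i0s) (Rmax_r _ _) | apply: IH].
Qed.

Definition indR (b : bool) : R := if b then 1 else 0.

Lemma indR_ge0 (b : bool) : 0 <= indR b.
Proof. by case: b; rewrite /indR; lra. Qed.

Section Probability.
Variables (T : finType) (p : T -> R).
Hypothesis p_distr : is_distr p.

Lemma prob_ge0 (E : pred T) : 0 <= prob p E.
Proof. by case: p_distr => p0 _; apply: sumR_ge0. Qed.

Lemma prob_le1 (E : pred T) : prob p E <= 1.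
Proof.
case: p_distr => p0 p1; rewrite -p1 /prob.
by apply: sumR_le_sub => // w.
Qed.

Lemma prob_compl (E : pred T) : prob p E = 1 - prob p (fun w => ~~ E w).
Proof. by case: p_distr => _ p1; rewrite /prob -p1 [X in _ = X - _](bigID E) /=; ring. Qed.

Lemma prob_witness (E : pred T) : 0 < prob p E -> exists w, E w /\ 0 < p w.
Proof.
move=> EP; apply: NNPP => Hnone.
suff : prob p E <= \big[Rplus/R0]_(w | E w) 0 by rewrite big1_eq; lra.
apply: sumR_le => w Ew.
by apply: Rnot_lt_le => pw; apply: Hnone; exists w.
Qed.

Lemma prob_as_sum (E : pred T) : prob p E = \big[Rplus/R0]_w (p w * indR (E w)).
Proof. by rewrite /prob big_mkcond; apply: eq_bigr => w _; rewrite /indR; case: (E w); ring. Qed.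

Lemma expectation_law (U : finType) (X : T -> U) (f : U -> R) :
  \big[Rplus/R0]_w (p w * f (X w)) = \big[Rplus/R0]_u (prob p (fun w => X w == u) * f u).
Proof.
rewrite (partition_big X predT) //; apply: eq_bigr => u _.
by rewrite /prob big_distrl; apply: eq_bigr => w /eqP ->.
Qed.

Lemma prob_union_bound (I : finType) (E : pred T) (F : I -> pred T) :
  (forall w, E w -> exists i, F i w) ->
  prob p E <= \big[Rplus/R0]_i prob p (F i).
Proof.
case: p_distr => p0 _ EF; rewrite /prob.
under [X in _ <= X]eq_bigr => i _ do rewrite big_mkcond.
rewrite exchange_big /= big_mkcond; apply: sumR_le => w _.
have term0 i : 0 <= (if F i w then p w else 0) by case: (F i w); [apply: p0 | lra].
case: (boolP (E w)) => Ew; last exact: sumR_ge0.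
have [i Fi] := EF w Ew.
rewrite (bigD1 i) //= Fi.
have := sumR_ge0 (fun j (_ : j != i) => term0 j); change R0 with 0; lra.
Qed.

Lemma law_sum1 (U : finType) (X : T -> U) :
  \big[Rplus/R0]_u prob p (fun w => X w == u) = 1.
Proof. by case: p_distr => _ p1; rewrite -p1 [in RHS](partition_big X predT). Qed.

Lemma law_distr (U : finType) (X : T -> U) : is_distr (fun u => prob p (fun w => X w == u)).
Proof. by split; [move=> u; apply: prob_ge0 | apply: law_sum1]. Qed.

End Probability.

(** * Shannon entropy and Rényi-type moments of a finite distribution *)

Lemma ln2_pos : 0 < ln 2.
Proof. by rewrite -ln_1; apply: ln_increasing; lra. Qed.

(* Entropy in bits of a finite distribution [q]; [entropy p X] is
   convertibly [shannon] of the law of [X]. *)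
Definition shannon (I : finType) (q : I -> R) : R :=
  - \big[Rplus/R0]_i xlog2 (q i).

Definition xln (q : R) : R := if Rlt_dec 0 q then q * ln q else 0.

Lemma shannon_xln (I : finType) (q : I -> R) :
  shannon q = - (\big[Rplus/R0]_i xln (q i)) / ln 2.
Proof.
have ln2_neq0 : ln 2 <> 0 by have := ln2_pos; lra.
rewrite /shannon (eq_bigr (fun i => xln (q i) * / ln 2)); last first.
  by move=> i _; rewrite /xlog2 /xln /log2; case: Rlt_dec => ? /=; field.
by rewrite -big_distrl /=; field.
Qed.

Definition rpow (q b : R) : R := if Rlt_dec 0 q then Rpower q b else 0.

Lemma rpow_ge0 (q b : R) : 0 <= rpow q b.
Proof. by rewrite /rpow; case: Rlt_dec => ? /=; [left; apply: exp_pos | lra]. Qed.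

Lemma rpow1 (q : R) : 0 <= q -> rpow q 1 = q.
Proof. by rewrite /rpow; case: Rlt_dec => q0 /= ?; [rewrite Rpower_1 | lra]. Qed.

Lemma rpowM (q q' b : R) : 0 <= q -> 0 <= q' -> rpow (q * q') b = rpow q b * rpow q' b.
Proof.
move=> q0 q'0; rewrite /rpow.
case: (Rlt_dec 0 q) => ? /=; case: (Rlt_dec 0 q') => ? /=; case: Rlt_dec => ? /=; try nra.
by rewrite Rpower_mult_distr.
Qed.

Lemma rpow_prod (I : finType) (F : I -> R) (b : R) : (forall i, 0 <= F i) ->
  rpow (\big[Rmult/R1]_i F i) b = \big[Rmult/R1]_i rpow (F i) b.
Proof.
move=> F0; suff [] : 0 <= \big[Rmult/R1]_i F i /\
  rpow (\big[Rmult/R1]_i F i) b = \big[Rmult/R1]_i rpow (F i) b by [].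
apply: (big_ind2 (fun x y => 0 <= x /\ rpow x b = y)) => //.
- by split; [lra | rewrite /rpow; case: Rlt_dec => ? /=; [rewrite /Rpower ln_1 Rmult_0_r exp_0 | lra]].
- by move=> x1 x2 y1 y2 [x10 <-] [x20 <-]; split; [nra | rewrite rpowM].
Qed.

Lemma rpow_chernoff_below (q t b : R) : 0 <= q <= t -> 0 < b < 1 ->
  q <= rpow q b * Rpower t (1 - b).
Proof.
move=> [q0 qt] b01; rewrite /rpow; case: Rlt_dec => q0' /=.
  rewrite {1}(_ : q = Rpower q b * Rpower q (1 - b)); last first.
    by rewrite -Rpower_plus Rplus_minus Rpower_1.
  apply: Rmult_le_compat_l; first by left; apply: exp_pos.
  by apply: Rle_Rpower_l; lra.
by rewrite Rmult_0_l; lra.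
Qed.

Lemma rpow_chernoff_above (q t a : R) : 0 < t < q -> 1 < a ->
  q <= rpow q a * Rpower t (1 - a).
Proof.
move=> [t0 tq] a1; rewrite /rpow; case: Rlt_dec => q0 /=; last lra.
rewrite {1}(_ : q = Rpower q a * Rpower q (1 - a)); last first.
  by rewrite -Rpower_plus Rplus_minus Rpower_1.
apply: Rmult_le_compat_l; first by left; apply: exp_pos.
rewrite (_ : 1 - a = - (a - 1)); last ring.
rewrite !Rpower_Ropp; apply: Rinv_le_contravar; first exact: exp_pos.
by apply: Rle_Rpower_l; lra.
Qed.

Lemma rpow_derive (q b : R) :
  derivable_pt_lim (fun b => rpow q b) b (rpow q b * ln q).
Proof.
rewrite /rpow; case: Rlt_dec => q0 /=; last by rewrite Rmult_0_l; apply: derivable_pt_lim_const.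
rewrite /Rpower.
have -> : (fun b => exp (b * ln q)) = comp exp (fun b => b * ln q) by [].
apply: derivable_pt_lim_comp; last exact: derivable_pt_lim_exp.
rewrite -[X in derivable_pt_lim _ _ X]Rmult_1_l.
exact: (derivable_pt_lim_scal_right id b 1 (ln q) (derivable_pt_lim_id b)).
Qed.

Lemma sum_derive (I : finType) (f : I -> R -> R) (d : I -> R) (x : R) :
  (forall i, derivable_pt_lim (f i) x (d i)) ->
  derivable_pt_lim (fun b => \big[Rplus/R0]_i f i b) x (\big[Rplus/R0]_i d i).
Proof.
move=> fd; rewrite unlock /reducebig; elim: (index_enum I) => [|a s IH] /=.
  exact: derivable_pt_lim_const.
exact: (derivable_pt_lim_plus (f a) (fun b => foldr _ _ s) x _ _ (fd a) IH).
Qed.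

Lemma neg_left_of_root (f : R -> R) (x l delta : R) :
  derivable_pt_lim f x l -> f x = 0 -> 0 < l -> 0 < delta ->
  exists y, x - delta < y < x /\ f y < 0.
Proof.
move=> fl fx0 l0 delta0; have [d Hd] := fl (l / 2) ltac:(lra).
have d0 := cond_pos d; set h := Rmin (d / 2) (delta / 2).
have h0 : 0 < h by apply: Rmin_pos; lra.
have [hd hdelta] : h <= d / 2 /\ h <= delta / 2 by split; [apply: Rmin_l | apply: Rmin_r].
have /Rabs_def2 := Hd (- h) ltac:(lra) ltac:(rewrite Rabs_Ropp Rabs_pos_eq; lra).
rewrite fx0 Rminus_0_r => slope.
exists (x - h); split; first lra.
have -> : f (x - h) = f (x + - h) / - h * - h by rewrite -/(Rminus x h); field; lra.
nra.
Qed.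

Lemma neg_right_of_root (f : R -> R) (x l : R) :
  derivable_pt_lim f x l -> f x = 0 -> l < 0 -> exists y, x < y /\ f y < 0.
Proof.
move=> fl fx0 l0; have [d Hd] := fl (- l / 2) ltac:(lra).
have d0 := cond_pos d.
have /Rabs_def2 := Hd (d / 2) ltac:(lra) ltac:(rewrite Rabs_pos_eq; lra).
rewrite fx0 Rminus_0_r => slope.
exists (x + d / 2); split; first lra.
have -> : f (x + d / 2) = f (x + d / 2) / (d / 2) * (d / 2) by field; lra.
nra.
Qed.

Section Renyi.
Variables (I : finType) (q : I -> R) (g : R).
Hypothesis q_distr : is_distr q.

(* [renyi_gap b] compares the moment [sum_i q_i ^ b] with [2 ^ ((1-b) g)];
   it vanishes at [b = 1], where its slope is [ln 2 * (g - H(q))]. *)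
Definition renyi_gap (b : R) : R :=
  \big[Rplus/R0]_i rpow (q i) b - Rpower 2 ((1 - b) * g).

Lemma renyi_gap1 : renyi_gap 1 = 0.
Proof.
case: q_distr => q0 q1; rewrite /renyi_gap Rminus_diag Rmult_0_l Rpower_O; last lra.
by rewrite (eq_bigr _ (fun i _ => rpow1 (q0 i))) q1; ring.
Qed.

Lemma renyi_gap_derive : derivable_pt_lim renyi_gap 1 (ln 2 * (g - shannon q)).
Proof.
have -> : ln 2 * (g - shannon q) =
    \big[Rplus/R0]_i (rpow (q i) 1 * ln (q i)) - Rpower 2 ((1 - 1) * g) * (- g * ln 2).
  have -> : \big[Rplus/R0]_i (rpow (q i) 1 * ln (q i)) = \big[Rplus/R0]_i xln (q i).
    by apply: eq_bigr => i _; rewrite /rpow /xln; case: Rlt_dec => ? /=; rewrite ?Rpower_1 //; ring.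
  rewrite shannon_xln Rminus_diag Rmult_0_l Rpower_O; last lra.
  by field; have := ln2_pos; lra.
apply: derivable_pt_lim_minus; first by apply: sum_derive => i; apply: rpow_derive.
rewrite /Rpower.
have -> : (fun b => exp ((1 - b) * g * ln 2)) = comp exp (fun b => (1 - b) * g * ln 2) by [].
apply: derivable_pt_lim_comp; last exact: derivable_pt_lim_exp.
have -> : (fun b => (1 - b) * g * ln 2) =
    plus_fct (fct_cte (g * ln 2)) (mult_real_fct (- g * ln 2) id).
  by apply: functional_extensionality => b; rewrite /plus_fct /fct_cte /mult_real_fct /id; ring.
rewrite -[X in derivable_pt_lim _ _ X]Rplus_0_l -[X in _ + X]Rmult_1_r.
apply: derivable_pt_lim_plus; first exact: derivable_pt_lim_const.
exact: derivable_pt_lim_scal (derivable_pt_lim_id 1).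
Qed.

Lemma renyi_below : shannon q < g ->
  exists b, 0 < b < 1 /\ \big[Rplus/R0]_i rpow (q i) b < Rpower 2 ((1 - b) * g).
Proof.
move=> Hg; have slope : 0 < ln 2 * (g - shannon q) by have := ln2_pos; nra.
have [b [b01 gap]] := neg_left_of_root renyi_gap_derive renyi_gap1 slope Rlt_0_1.
by exists b; split; [lra | rewrite /renyi_gap in gap; lra].
Qed.

Lemma renyi_above : g < shannon q ->
  exists a, 1 < a /\ \big[Rplus/R0]_i rpow (q i) a < Rpower 2 ((1 - a) * g).
Proof.
move=> Hg; have slope : ln 2 * (g - shannon q) < 0 by have := ln2_pos; nra.
have [a [a1 gap]] := neg_right_of_root renyi_gap_derive renyi_gap1 slope.
by exists a; split; [lra | rewrite /renyi_gap in gap; lra].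
Qed.

End Renyi.

(** * Elementary facts on entropy *)

Lemma ln_le (x y : R) : 0 < x -> x <= y -> ln x <= ln y.
Proof. by move=> x0 [xy|<-]; [left; apply: ln_increasing | lra]. Qed.

Lemma xln_le0 (q : R) : q <= 1 -> xln q <= 0.
Proof.
rewrite /xln; case: Rlt_dec => q0 /= q1; last lra.
have : ln q <= 0 by rewrite -ln_1; apply: ln_le.
nra.
Qed.

(* [x ln x] is superadditive on nonnegative reals, and so on finite sums:
   merging outcomes can only decrease entropy. *)
Lemma xln_superadditive (a b : R) : 0 <= a -> 0 <= b -> xln a + xln b <= xln (a + b).
Proof.
move=> a0 b0; rewrite /xln.
case: (Rlt_dec 0 a) => a0' /=; case: (Rlt_dec 0 b) => b0' /=;
  case: (Rlt_dec 0 (a + b)) => ab0 /=; try lra.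
- have la : ln a <= ln (a + b) by apply: ln_le; lra.
  have lb : ln b <= ln (a + b) by apply: ln_le; lra.
  nra.
- have -> : b = 0 by lra.
  by rewrite !Rplus_0_r; lra.
- have -> : a = 0 by lra.
  by rewrite !Rplus_0_l; lra.
Qed.

Lemma xln_sum_le (I : finType) (P : pred I) (F : I -> R) : (forall i, 0 <= F i) ->
  \big[Rplus/R0]_(i | P i) xln (F i) <= xln (\big[Rplus/R0]_(i | P i) F i).
Proof.
move=> F0; suff [] : \big[Rplus/R0]_(i | P i) xln (F i) <= xln (\big[Rplus/R0]_(i | P i) F i)
  /\ 0 <= \big[Rplus/R0]_(i | P i) F i by [].
apply: (big_ind2 (fun x y => x <= xln y /\ 0 <= y)) => [|x1 x2 y1 y2 [h1 y10] [h2 y20]|i _].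
- by rewrite /xln; case: Rlt_dec => ? /=; lra.
- by have := xln_superadditive y10 y20; split; lra.
- by split; [lra | apply: F0].
Qed.

Lemma xln_sum_single (I : finType) (P : pred I) (F : I -> R) : (forall i, 0 <= F i) ->
  (forall i j, P i -> P j -> 0 < F i -> 0 < F j -> i = j) ->
  \big[Rplus/R0]_(i | P i) xln (F i) = xln (\big[Rplus/R0]_(i | P i) F i).
Proof.
move=> F0 single; have xln0 : xln 0 = 0 by rewrite /xln; case: Rlt_dec => ? /=; lra.
case: (classic (exists i0, P i0 /\ 0 < F i0)) => [[i0 [Pi0 Fi0]] | none].
  have off i : P i && (i != i0) -> F i = 0.
    by case/andP=> Pi ne; case: (F0 i) => // Fi; case/eqP: ne; apply: single.
  have S1 : \big[Rplus/R0]_(i | P i && (i != i0)) xln (F i) = 0 by apply: big1 => i /off ->.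
  have S2 : \big[Rplus/R0]_(i | P i && (i != i0)) F i = 0 by apply: big1 => i /off ->.
  by rewrite (bigD1 i0) //= S1 [in RHS](bigD1 i0) //= S2 !Rplus_0_r.
have off i : P i -> F i = 0.
  by move=> Pi; case: (F0 i) => // Fi; case: none; exists i.
by rewrite !big1 // => i /off ->.
Qed.

Lemma shannon_ge0 (I : finType) (q : I -> R) : is_distr q -> 0 <= shannon q.
Proof.
move=> q_distr; rewrite shannon_xln.
have : \big[Rplus/R0]_i xln (q i) <= \big[Rplus/R0]_(i : I) 0.
  apply: sumR_le => i _; apply: xln_le0.
  by have := prob_le1 q_distr (pred1 i); rewrite /prob big_pred1_eq.
rewrite big1_eq => ?; have := ln2_pos => ?.
by apply: Rmult_le_pos; [lra | left; apply: Rinv_0_lt_compat].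
Qed.

Section EntropyOfFunctions.
Variables (T U : finType) (p : T -> R) (X : T -> U).
Hypothesis p_distr : is_distr p.

Lemma entropyE : entropy p X = shannon (fun u => prob p (fun w => X w == u)).
Proof. by []. Qed.

Lemma entropy_ge0 : 0 <= entropy p X.
Proof. exact/shannon_ge0/law_distr. Qed.

Lemma entropy_le_shannon : entropy p X <= shannon p.
Proof.
case: p_distr => p0 _; rewrite entropyE !shannon_xln.
apply: Rmult_le_compat_r; first by left; apply/Rinv_0_lt_compat/ln2_pos.
apply: Ropp_le_contravar; rewrite (partition_big X predT) //.
by apply: sumR_le => u _; apply: xln_sum_le.
Qed.

Lemma entropy_inj : (forall w w', 0 < p w -> 0 < p w' -> X w = X w' -> w = w') ->
  entropy p X = shannon p.
Proof.
case: p_distr => p0 _ Xinj; rewrite entropyE !shannon_xln; congr (- _ / _).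
rewrite [in RHS](partition_big X predT) //; apply: eq_bigr => u _.
symmetry; apply: xln_sum_single => // w w' /eqP Xw /eqP Xw' pw pw'.
by apply: Xinj => //; rewrite Xw Xw'.
Qed.

End EntropyOfFunctions.

Section ConditionalEntropy.
Variables (T U W : finType) (p : T -> R) (X : T -> U) (Y : T -> W).
Hypothesis p_distr : is_distr p.

Lemma cond_entropy_const (y0 : W) : (forall w, Y w = y0) -> cond_entropy p X Y = entropy p X.
Proof.
move=> Yw; rewrite /cond_entropy /entropy; congr (- _); apply: eq_bigr => u _.
rewrite (bigD1 y0) //= big1 => [|y ne_y]; last first.
  rewrite /prob big_pred0 => [|w]; first by case: Rlt_dec => ? /=; lra.
  by rewrite Yw [y0 == _]eq_sym (negbTE ne_y) andbF.
have -> : prob p (fun w => Y w == y0) = 1.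
  by case: p_distr => _ p1; rewrite -p1; apply: eq_bigl => w; rewrite Yw eqxx.
have -> : prob p (fun w => (X w == u) && (Y w == y0)) = prob p (fun w => X w == u).
  by apply: eq_bigl => w; rewrite Yw eqxx andbT.
by rewrite /xlog2 Rdiv_1_r Rplus_0_r.
Qed.

Lemma cond_entropy_determined :
  (forall w w', 0 < p w -> 0 < p w' -> Y w = Y w' -> X w = X w') ->
  cond_entropy p X Y = 0.
Proof.
case: p_distr => p0 _ XofY.
rewrite /cond_entropy big1 => [|u _]; first by rewrite Ropp_0.
apply: big1 => y _ /=; case: Rlt_dec => pxy /=; last by [].
have [w0 [/andP [/eqP Xw0 /eqP Yw0] pw0]] := prob_witness pxy.
have -> : prob p (fun w => Y w == y) = prob p (fun w => (X w == u) && (Y w == y)).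
  rewrite /prob [LHS](bigID (fun w => X w == u)) /= [X in _ + X]big1 => [|w /andP [/eqP Yw Xw]].
    by rewrite Rplus_0_r; apply: eq_bigl => w; rewrite andbC.
  case: (p0 w) => // pw; case/negP: Xw; apply/eqP.
  by rewrite -Xw0; apply: XofY => //; rewrite Yw Yw0.
rewrite /Rdiv Rinv_r; last lra.
by rewrite /log2 ln_1 /Rdiv Rmult_0_l Rmult_0_r.
Qed.

End ConditionalEntropy.

(** * Memoryless sources *)

Section ProductLaw.
Variables (r n : nat) (p : Omega r -> R).
Hypothesis p_distr : is_distr p.

Lemma prob_n_distr : is_distr (prob_n (n := n) p).
Proof.
case: p_distr => p0 p1; split => [w|].
  by apply: (big_ind (fun x => 0 <= x)) => // [|x y]; [lra | nra].
rewrite /prob_n -(bigA_distr_bigA (fun _ v => p v)) /= p1.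
by rewrite big1_eq.
Qed.

Lemma prob_n_coordinates (U : finType) (f : Omega r -> U) (x : {ffun 'I_n -> U}) :
  prob (prob_n p) (fun w : Sample r n => [ffun t => f (w t)] == x) =
  \big[Rmult/R1]_t prob p (fun v => f v == x t).
Proof.
rewrite /prob; under [RHS]eq_bigr => t _ do rewrite big_mkcond /=.
rewrite bigA_distr_bigA /= big_mkcond /=; apply: eq_bigr => w _.
case: (boolP [forall t, f (w t) == x t]) => [/forallP fwx | /forallPn [t0 ne_t0]].
  have -> : [ffun t => f (w t)] == x by apply/eqP/ffunP => t; rewrite ffunE; apply/eqP.
  by apply: eq_bigr => t _; rewrite fwx.
have -> : ([ffun t => f (w t)] == x) = false.
  by apply/negbTE; apply: contra ne_t0 => /eqP <-; rewrite ffunE.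
by rewrite (bigD1 t0) //= (negbTE ne_t0) Rmult_0_l.
Qed.

End ProductLaw.

Lemma sum_rpow_prod (n : nat) (U : finType) (q : U -> R) (b : R) : (forall u, 0 <= q u) ->
  \big[Rplus/R0]_(x : {ffun 'I_n -> U}) rpow (\big[Rmult/R1]_t q (x t)) b =
  (\big[Rplus/R0]_u rpow (q u) b) ^ n.
Proof.
move=> q0; under [LHS]eq_bigr => x _ do rewrite (@rpow_prod _ (fun t => q (x t))) //.
rewrite -(bigA_distr_bigA (fun _ u => rpow (q u) b)) big_const_ord.
by elim: n => //= k ->.
Qed.

(** * Random linear maps over a finite field *)

Section RandomLinearMaps.
Import GRing.Theory.
Local Open Scope ring_scope.
Variables (F : finFieldType) (m n : nat).

Lemma card_mx_fiber (d : 'cV[F]_n) (c : 'cV[F]_m) : d != 0 ->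
  #|[set B : 'M[F]_(m, n) | B *m d == c]| = #|[set B : 'M[F]_(m, n) | B *m d == 0]|.
Proof.
move=> d_neq0; have [j dj] : exists j, d j 0 != 0.
  apply/existsP; apply: contraR d_neq0 => /existsPn dj0; apply/eqP/matrixP => i k.
  by rewrite (ord1 k) mxE; apply/eqP/negPn.
set E := (d j 0)^-1 *: (c *m delta_mx 0 j).
have Ed : E *m d = c.
  rewrite /E -scalemxAl -mulmxA -rowE [row j d]mx11_scalar mul_mx_scalar scalerA.
  by rewrite mxE mulVf // scale1r.
have -> : [set B : 'M[F]_(m, n) | B *m d == c] =
          (fun B => B + E) @: [set B : 'M[F]_(m, n) | B *m d == 0].
  apply/setP => B; rewrite inE; apply/eqP/imsetP => [Bd|[B0]].
    by exists (B - E); rewrite ?subrK // inE mulmxBl Bd Ed subrr.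
  by rewrite inE => /eqP B0d ->; rewrite mulmxDl B0d Ed add0r.
by rewrite card_imset //; apply: addIr.
Qed.

Lemma card_mx_kernel (d : 'cV[F]_n) : d != 0 ->
  muln #|[set B : 'M[F]_(m, n) | B *m d == 0]| (expn #|F| m) = expn #|F| (muln m n).
Proof.
move=> d_neq0; have count_by_image : #|{: 'M[F]_(m, n)}| =
    \sum_(c : 'cV[F]_m) #|[set B : 'M[F]_(m, n) | B *m d == c]|.
  rewrite -sum1_card (partition_big (fun B => B *m d) predT) //=.
  by apply: eq_bigr => c _; rewrite -sum1_card; apply: eq_bigl => B; rewrite inE.
move: count_by_image; rewrite card_mx => ->.
under eq_bigr => c _ do rewrite card_mx_fiber //.
by rewrite sum_nat_const card_mx muln1 mulnC.
Qed.

Lemma card_mx_collisions (a b : 'cV[F]_n) : a != b ->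
  muln #|[set B : 'M[F]_(m, n) | B *m a == B *m b]| (expn #|F| m) =
  #|{: 'M[F]_(m, n)}|.
Proof.
move=> ab; have ab_neq0 : a - b != 0 by rewrite subr_eq0.
rewrite card_mx -(card_mx_kernel ab_neq0); congr (muln _ _); apply: eq_card => B.
by rewrite !inE mulmxBr subr_eq0.
Qed.

End RandomLinearMaps.

Lemma INR_expn (a k : nat) : INR (expn a k) = INR a ^ k.
Proof. by elim: k => [|k IH] //; rewrite expnS mult_INR IH. Qed.

Lemma collision_count (m n : nat) (a b : 'cV['F_2]_n) : a != b ->
  \big[Rplus/R0]_(B : 'M['F_2]_(m, n)) indR (mulmx B a == mulmx B b) =
  INR #|{: 'M['F_2]_(m, n)}| / 2 ^ m.
Proof.
move=> ab; have := card_mx_collisions m ab; rewrite card_Fp // => <-.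
rewrite mult_INR INR_expn (_ : INR 2 = 2) /Rdiv ?Rmult_assoc ?Rinv_r ?Rmult_1_r //;
  last by apply: pow_nonzero; lra.
rewrite -[X in _ = X]Rmult_1_r -sumR_const [RHS]big_mkcond /=.
by apply: eq_bigr => B _; rewrite inE.
Qed.

(** * Random binning with a threshold decoder *)

Definition Rltb (a b : R) : bool := if Rlt_dec a b then true else false.

Lemma RltbP (a b : R) : reflect (a < b) (Rltb a b).
Proof. by rewrite /Rltb; case: Rlt_dec => ab; constructor. Qed.

Definition toV (n : nat) (x : {ffun 'I_n -> bool}) : 'cV['F_2]_n := \col_t b2F (x t).

Lemma toV_inj (n : nat) : injective (@toV n).
Proof.
move=> x y /matrixP xy; apply/ffunP => t.
by have := xy t ord0; rewrite !mxE; case: (x t); case: (y t).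
Qed.

Section ThresholdDecoding.
Variables (T : finType) (P : T -> R) (n m : nat) (Y : T -> {ffun 'I_n -> bool}).
Hypothesis P_distr : is_distr P.

Definition seq_law (x : {ffun 'I_n -> bool}) : R := prob P (fun w => Y w == x).

Definition threshold_decoder (t : R) (B : 'M['F_2]_(m, n)) (s : 'cV['F_2]_m) : 'cV['F_2]_n :=
  if [pick x | Rltb t (seq_law x) && (mulmx B (toV x) == s)] is Some x
  then toV x else const_mx (b2F false).

Definition decoding_error (t : R) (B : 'M['F_2]_(m, n)) : R :=
  prob P (fun w => threshold_decoder t B (mulmx B (toV (Y w))) != toV (Y w)).

Definition collision (t : R) (B : 'M['F_2]_(m, n)) (x x' : {ffun 'I_n -> bool}) : bool :=
  [&& x' != x, Rltb t (seq_law x') & mulmx B (toV x') == mulmx B (toV x)].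

Lemma decoding_failure t B x :
  indR (threshold_decoder t B (mulmx B (toV x)) != toV x) <=
  indR (~~ Rltb t (seq_law x)) + \big[Rplus/R0]_x' indR (collision t B x x').
Proof.
have S0 : 0 <= \big[Rplus/R0]_x' indR (collision t B x x').
  by apply: sumR_ge0 => x' _; apply: indR_ge0.
case: (boolP (Rltb t (seq_law x))) => x_prob; last first.
  apply: (Rle_add_nonneg S0); rewrite /indR /=; case: ifP => _; lra.
rewrite [indR (~~ true)]/indR /= Rplus_0_l /threshold_decoder.
case: (pickP (fun x' => Rltb t (seq_law x') && (mulmx B (toV x') == mulmx B (toV x))))
  => [x' /andP [x'_prob x'_bin] | none]; last by have := none x; rewrite x_prob eqxx.
case: (eqVneq x' x) => [-> | x'x]; first by rewrite eqxx.
have coll : collision t B x x' by apply/and3P.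
apply: Rle_trans (sumR_ge_term x' (fun x'' => indR_ge0 (collision t B x x''))).
by rewrite coll /indR; case: ifP => _; lra.
Qed.

Lemma card_probable t : 0 < t -> INR #|[pred x | Rltb t (seq_law x)]| * t <= 1.
Proof.
move=> t0; rewrite -sumR_const -(law_sum1 P_distr Y).
apply: (@Rle_trans _ (\big[Rplus/R0]_(x in [pred x | Rltb t (seq_law x)]) seq_law x)).
  by apply: sumR_le => x; rewrite inE => /RltbP; lra.
by apply: sumR_le_sub => // x; apply: prob_ge0.
Qed.

Lemma average_collisions t x : 0 < t ->
  \big[Rplus/R0]_(B : 'M['F_2]_(m, n)) \big[Rplus/R0]_x' indR (collision t B x x')
  <= INR #|{: 'M['F_2]_(m, n)}| / t / 2 ^ m.
Proof.
move=> t0; set K := INR _.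
have two_m0 : 0 < 2 ^ m by apply: pow_lt; lra.
have c0 : 0 <= K / 2 ^ m by apply: Rle_mult_inv_pos => //; apply: pos_INR.
have per_sequence x' : \big[Rplus/R0]_(B : 'M['F_2]_(m, n)) indR (collision t B x x') <=
    indR (Rltb t (seq_law x')) * (K / 2 ^ m).
  have := indR_ge0 (Rltb t (seq_law x')); rewrite /collision.
  case: (eqVneq x' x) => [-> | x'x] /= ind0; first by rewrite big1 //; nra.
  case: (Rltb t (seq_law x')) ind0 => /= ind0; last by rewrite big1 //; nra.
  rewrite Rmult_1_l collision_count; first exact: Rle_refl.
  by apply: contra x'x => /eqP /toV_inj ->.
rewrite exchange_big /=; apply: Rle_trans (sumR_le (fun x' _ => per_sequence x')) _.
rewrite -big_distrl /=.
have -> : \big[Rplus/R0]_x' indR (Rltb t (seq_law x')) =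
    INR #|[pred x' | Rltb t (seq_law x')]|.
  by rewrite -[RHS]Rmult_1_r -sumR_const [RHS]big_mkcond; apply: eq_bigr => x' _; rewrite inE.
have -> : K / t / 2 ^ m = / t * (K / 2 ^ m) by field; lra.
apply: Rmult_le_compat_r => //.
have := card_probable t0 => k_le.
by apply: (Rmult_le_reg_r t) => //; rewrite Rinv_l; lra.
Qed.

Lemma average_decoding_error t : 0 < t ->
  \big[Rplus/R0]_(B : 'M['F_2]_(m, n)) decoding_error t B <=
  INR #|{: 'M['F_2]_(m, n)}| *
    (\big[Rplus/R0]_x (seq_law x * indR (~~ Rltb t (seq_law x))) + / t / 2 ^ m).
Proof.
move=> t0; case: P_distr => P0 _.
have per_matrix B : decoding_error t B <= \big[Rplus/R0]_w (P w *
    (indR (~~ Rltb t (seq_law (Y w))) + \big[Rplus/R0]_x' indR (collision t B (Y w) x'))).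
  rewrite /decoding_error prob_as_sum; apply: sumR_le => w _.
  by apply: Rmult_le_compat_l => //; apply: decoding_failure.
apply: Rle_trans (sumR_le (fun B _ => per_matrix B)) _.
rewrite exchange_big /=; set K := INR _.
apply: (@Rle_trans _ (\big[Rplus/R0]_w
    (P w * (K * indR (~~ Rltb t (seq_law (Y w))) + K / t / 2 ^ m)))).
  apply: sumR_le => w _; rewrite -big_distrr /=; apply: Rmult_le_compat_l => //.
  rewrite big_split /= sumR_constT; apply: Rplus_le_compat_l.
  exact: average_collisions.
rewrite (expectation_law P Y (fun x => K * indR (~~ Rltb t (seq_law x)) + K / t / 2 ^ m)).
under eq_bigr => x _ do rewrite Rmult_plus_distr_l.
rewrite big_split /= -big_distrl /= (law_sum1 P_distr) Rmult_1_l Rmult_plus_distr_l big_distrr /=.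
apply: Req_le; congr (_ + _); last by rewrite /Rdiv; ring.
by apply: eq_bigr => x _; rewrite (_ : prob P _ = seq_law x) //; ring.
Qed.

Lemma improbable_mass t b : 0 < t -> 0 < b < 1 ->
  \big[Rplus/R0]_x (seq_law x * indR (~~ Rltb t (seq_law x))) <=
  Rpower t (1 - b) * \big[Rplus/R0]_x rpow (seq_law x) b.
Proof.
move=> t0 b01; rewrite big_distrr /=; apply: sumR_le => x _.
have Q0 : 0 <= seq_law x by apply: prob_ge0.
rewrite /indR; case: RltbP => [_ | improbable] /=.
  by rewrite Rmult_0_r; apply: Rmult_le_pos; [left; apply: exp_pos | apply: rpow_ge0].
rewrite Rmult_1_r Rmult_comm; apply: rpow_chernoff_below => //; lra.
Qed.

End ThresholdDecoding.

(** * Achievability of every rate above [max_i H(V_i)] *)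

Lemma ceil_nat_spec (x : R) : 0 <= x -> x <= INR (ceil_nat x) < x + 1.
Proof.
move=> x0; rewrite /ceil_nat /Int_part.
have [up_gt up_le] := archimed (- x).
have nonneg : (0 <= - (up (- x) - 1))%Z by apply: le_IZR; rewrite opp_IZR minus_IZR; lra.
by rewrite INR_IZR_INZ Z2Nat.id // opp_IZR minus_IZR; lra.
Qed.

Lemma pow_Rpower2 (x : R) (n : nat) : Rpower 2 x ^ n = Rpower 2 (x * INR n).
Proof. by rewrite -Rpower_pow ?Rpower_mult //; apply: exp_pos. Qed.

Lemma chernoff_rate (n : nat) (g b S : R) :
  Rpower (Rpower 2 (- (INR n * g))) (1 - b) * S ^ n = (S / Rpower 2 ((1 - b) * g)) ^ n.
Proof.
rewrite Rpower_mult /Rdiv Rpow_mult_distr pow_inv pow_Rpower2 -Rpower_Ropp Rmult_comm.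
by congr (_ * Rpower 2 _); ring.
Qed.

Definition source_seq (r n : nat) (i : 'I_r) (w : Sample r n) : {ffun 'I_n -> bool} :=
  [ffun t => w t i].

Lemma Vn_source_seq (r n : nat) (w : Sample r n) (i : 'I_r) : Vn w i = toV (source_seq i w).
Proof. by apply/matrixP => t k; rewrite !mxE ffunE. Qed.

Definition joint_decoder (r n m : nat) (p : Omega r -> R) (t : R) (B : 'M['F_2]_(m, n))
  (s : {ffun 'I_r -> 'cV['F_2]_m}) : {ffun 'I_r -> 'cV['F_2]_n} :=
  [ffun i => threshold_decoder (prob_n p) (source_seq i) t B (s i)].

Lemma joint_error_le (r n m : nat) (p : Omega r -> R) (t : R) (B : 'M['F_2]_(m, n)) :
  is_distr p ->
  error_prob p B (joint_decoder p t B) <=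
  \big[Rplus/R0]_i decoding_error (prob_n p) (source_seq i) t B.
Proof.
move=> p_distr; apply: prob_union_bound; first exact: prob_n_distr.
move=> w /eqP wrong; apply: NNPP => none; apply: wrong; apply/ffunP => i.
rewrite !ffunE Vn_source_seq; apply/eqP; apply: contraT => ne_i.
by case: none; exists i.
Qed.

Lemma source_moment (r n : nat) (p : Omega r -> R) (i : 'I_r) (b : R) : is_distr p ->
  \big[Rplus/R0]_x rpow (seq_law (prob_n (n := n) p) (source_seq i) x) b =
  (\big[Rplus/R0]_c rpow (prob p (fun v => v i == c)) b) ^ n.
Proof.
move=> p_distr; rewrite -sum_rpow_prod => [|c]; last exact: prob_ge0.
by apply: eq_bigr => x _; rewrite -(prob_n_coordinates p (fun v => v i)).
Qed.

Lemma source_average_error (r n m : nat) (p : Omega r -> R) (i : 'I_r) (g b Rt : R) :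
  is_distr p -> 0 < b < 1 -> INR n * Rt <= INR m ->
  \big[Rplus/R0]_(B : 'M['F_2]_(m, n))
     decoding_error (prob_n p) (source_seq i) (Rpower 2 (- (INR n * g))) B <=
  INR #|{: 'M['F_2]_(m, n)}| *
  ((\big[Rplus/R0]_c rpow (prob p (fun v => v i == c)) b / Rpower 2 ((1 - b) * g)) ^ n
   + Rpower 2 (g - Rt) ^ n).
Proof.
move=> p_distr b01 nRm; set t := Rpower 2 (- (INR n * g)).
have t0 : 0 < t by apply: exp_pos.
apply: Rle_trans (average_decoding_error m (source_seq i) (prob_n_distr n p_distr) t0) _.
apply: Rmult_le_compat_l; first exact: pos_INR.
apply: Rplus_le_compat.
  apply: Rle_trans (improbable_mass (source_seq i) (prob_n_distr n p_distr) t0 b01) _.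
  by rewrite source_moment // chernoff_rate; apply: Rle_refl.
rewrite pow_Rpower2 /t Rpower_Ropp Rinv_inv -Rpower_pow; last lra.
rewrite /Rdiv -Rpower_Ropp -Rpower_plus; apply: Rle_Rpower; lra.
Qed.

(* Choice of the exponents: with [max_i H(V_i) < g < R], every source has a
   moment of order [b_i < 1] below [2 ^ ((1 - b_i) g)], and all the rates
   [sum_c P(V_i = c) ^ b_i / 2 ^ ((1 - b_i) g)] and [2 ^ (g - R)] are
   bounded by a common [e < 1]. *)
Lemma achievability_exponents (r : nat) (p : Omega r -> R) (Rt : R) : is_distr p ->
  \big[Rmax/R0]_i entropy p (Vi i) < Rt ->
  exists (g : R) (b : 'I_r -> R) (e : R), 0 <= e < 1 /\ Rpower 2 (g - Rt) <= e /\
    forall i, 0 < b i < 1 /\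
      \big[Rplus/R0]_c rpow (prob p (fun v => v i == c)) (b i) / Rpower 2 ((1 - b i) * g) <= e.
Proof.
move=> p_distr; set Hmax := \big[Rmax/R0]_i _ => Hmax_lt; set g := (Hmax + Rt) / 2.
pose moment i b := \big[Rplus/R0]_c rpow (prob p (fun v => v i == c)) b.
have [b b_ok] : exists b : 'I_r -> R,
    forall i, 0 < b i < 1 /\ moment i (b i) < Rpower 2 ((1 - b i) * g).
  apply: (@fin_all_exists _ (fun=> R)
    (fun i bi => 0 < bi < 1 /\ moment i bi < Rpower 2 ((1 - bi) * g))) => i.
  apply: renyi_below; first exact: law_distr.
  have : entropy p (Vi i) <= Hmax by apply: (le_bigmax (fun i => entropy p (Vi i))).
  by rewrite /g => ?; change (entropy p (Vi i) < (Hmax + Rt) / 2); lra.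
pose rho i := moment i (b i) / Rpower 2 ((1 - b i) * g).
have rho_ok i : 0 <= rho i < 1.
  have [_ small] := b_ok i; have A0 : 0 < Rpower 2 ((1 - b i) * g) by apply: exp_pos.
  split; first by apply: Rle_mult_inv_pos => //; apply: sumR_ge0 => c _; apply: rpow_ge0.
  apply: (Rmult_lt_reg_r (Rpower 2 ((1 - b i) * g))) => //.
  by rewrite /rho /Rdiv Rmult_assoc Rinv_l; lra.
have d_ok : 0 < Rpower 2 (g - Rt) < 1.
  split; first exact: exp_pos.
  rewrite -(Rpower_O 2); last lra.
  by apply: Rpower_lt; rewrite /g; lra.
exists g, b, (Rmax (\big[Rmax/R0]_i rho i) (Rpower 2 (g - Rt))); split; [split | split].
- by apply: Rle_trans (Rmax_r _ _); lra.
- apply: Rmax_lub_lt; last lra.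
  by apply: bigmax_lt => [|i _]; [lra | exact: (proj2 (rho_ok i))].
- exact: Rmax_r.
- move=> i; split; first exact: (b_ok i).1.
  by apply: Rle_trans (Rmax_l _ _); apply: (le_bigmax rho).
Qed.

(* Above [max_i H(V_i)], the best common matrix with [ceil (n R)] rows has
   error probability at most [2 r e ^ n] for some [e < 1]: some matrix is
   at most as bad as the average over all matrices. *)
Lemma error_exponentially_small (r : nat) (p : Omega r -> R) (Rt : R) : is_distr p ->
  \big[Rmax/R0]_i entropy p (Vi i) < Rt ->
  exists e, 0 <= e < 1 /\ forall n : nat,
    exists (B : 'M['F_2]_(ceil_nat (INR n * Rt), n))
           (dec : {ffun 'I_r -> 'cV['F_2]_(ceil_nat (INR n * Rt))} ->
                  {ffun 'I_r -> 'cV['F_2]_n}),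
      error_prob p B dec <= INR r * (2 * e ^ n).
Proof.
move=> p_distr Hmax_lt.
have Hmax0 : 0 <= \big[Rmax/R0]_i entropy p (Vi i) by apply: bigmax_ge0.
have Rt0 : 0 <= Rt by lra.
have [g [b [e [e_ok [d_e rho_e]]]]] := achievability_exponents p_distr Hmax_lt.
exists e; split => // n; set m := ceil_nat (INR n * Rt); set t := Rpower 2 (- (INR n * g)).
have nRm : INR n * Rt <= INR m by have [] := ceil_nat_spec (Rmult_le_pos _ _ (pos_INR n) Rt0).
have avg : \big[Rplus/R0]_(B : 'M['F_2]_(m, n))
    \big[Rplus/R0]_i decoding_error (prob_n p) (source_seq i) t B <=
    INR #|{: 'M['F_2]_(m, n)}| * \big[Rplus/R0]_(i : 'I_r) (2 * e ^ n).
  rewrite exchange_big /= big_distrr /=; apply: sumR_le => i _.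
  have [b01 rho_le] := rho_e i.
  apply: Rle_trans (source_average_error i g p_distr b01 nRm) _.
  apply: Rmult_le_compat_l; first exact: pos_INR.
  set rho := _ / _ in rho_le *.
  have rho0 : 0 <= rho.
    apply: Rle_mult_inv_pos; last exact: exp_pos.
    by apply: sumR_ge0 => c _; apply: rpow_ge0.
  have := pow_incr _ _ n (conj rho0 rho_le).
  have d0 : 0 <= Rpower 2 (g - Rt) by left; apply: exp_pos.
  have := pow_incr _ _ n (conj d0 d_e).
  lra.
have [B goodB] := exists_le_average (const_mx (b2F false)) avg.
exists B, (joint_decoder p t B).
apply: Rle_trans (joint_error_le t B p_distr) _; apply: Rle_trans goodB _.
by rewrite sumR_constT card_ord; apply: Rle_refl.
Qed.

Theorem achievability (r : nat) (p : Omega r -> R) (Rt : R) : is_distr p ->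
  \big[Rmax/R0]_i entropy p (Vi i) < Rt -> achievable_sc p Rt.
Proof.
move=> p_distr Hmax_lt.
have [e [[e0 e1] small_error]] := error_exponentially_small p_distr Hmax_lt.
have Hmax0 : 0 <= \big[Rmax/R0]_i entropy p (Vi i) by apply: bigmax_ge0.
split; first lra.
move=> eps eps0; have r0 := pos_INR r.
have [N small] := pow_lt_1_zero e ltac:(rewrite Rabs_pos_eq //) (eps / (2 * INR r + 1))
  ltac:(apply: Rdiv_lt_0_compat; lra).
exists N => n /leP nN; have [B [dec err]] := small_error n.
exists B, dec; apply: Rle_trans err _.
have := small n nN; rewrite Rabs_pos_eq; last exact: pow_le.
have : INR r * (2 * (eps / (2 * INR r + 1))) < eps.
  apply: (Rmult_lt_reg_r (2 * INR r + 1)); first lra.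
  by field_simplify; lra.
nra.
Qed.

(** * Converse for identical sources *)

Lemma mass_split (x t a : R) : 0 <= x -> 0 < t -> 1 < a ->
  x <= t * indR (Rltb 0 x) + rpow x a * Rpower t (1 - a).
Proof.
move=> x0 t0 a1.
have tail0 : 0 <= rpow x a * Rpower t (1 - a).
  by apply: Rmult_le_pos; [apply: rpow_ge0 | left; apply: exp_pos].
have ind0 : 0 <= t * indR (Rltb 0 x) by apply: Rmult_le_pos; [lra | apply: indR_ge0].
case: (Rle_lt_dec x t) => [xt | tx]; last by have := rpow_chernoff_above (conj t0 tx) a1; lra.
by rewrite /indR; case: RltbP => x_pos; lra.
Qed.

Lemma prod_pos_each (I : finType) (F : I -> R) : (forall i, 0 <= F i) ->
  0 < \big[Rmult/R1]_i F i -> forall i, 0 < F i.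
Proof.
move=> F0 prod_pos i; case: (F0 i) => // Fi0.
by move: prod_pos; rewrite (bigD1 i) //= -Fi0 Rmult_0_l; lra.
Qed.

Section IdenticalSources.
Variables (r : nat) (p : Omega r -> R) (i0 : 'I_r).
Hypothesis p_distr : is_distr p.
Hypothesis p_diag : forall v : Omega r, 0 < p v -> forall i j, v i = v j.

Lemma sample_diag (n : nat) (w : Sample r n) : 0 < prob_n p w -> forall t i, w t i = w t i0.
Proof.
case: p_distr => p0 _ pw t i; apply: p_diag.
exact: (prod_pos_each (F := fun t => p (w t))).
Qed.

Definition decodable (n m : nat) (B : 'M['F_2]_(m, n))
  (g : {ffun 'I_r -> 'cV['F_2]_m} -> {ffun 'I_r -> 'cV['F_2]_n}) : pred (Sample r n) :=
  [pred w | (g (encode B w) == all_Vn w) && Rltb 0 (prob_n p w)].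

(* There are at most [2 ^ m] of them, since on such samples all [r] bins
   coincide, so the bin of [V_1^n] determines the sample. *)
Lemma card_decodable (n m : nat) (B : 'M['F_2]_(m, n))
  (g : {ffun 'I_r -> 'cV['F_2]_m} -> {ffun 'I_r -> 'cV['F_2]_n}) :
  leq #|decodable B g| (expn 2 m).
Proof.
apply: (@leq_trans #|{: 'cV['F_2]_m}|); last by rewrite card_mx card_Fp // muln1.
apply: (@leq_card_in _ _ (fun w => mulmx B (Vn w i0))) => w w'.
have encodeE (v : Sample r n) : 0 < prob_n p v -> encode B v = [ffun=> mulmx B (Vn v i0)].
  move=> pv; apply/ffunP => i; rewrite !ffunE; congr mulmx.
  by apply/matrixP => t k; rewrite !mxE (sample_diag pv).
rewrite !inE => /andP [/eqP gw /RltbP pw] /andP [/eqP gw' /RltbP pw'] same_bin.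
have : all_Vn w = all_Vn w' by rewrite -gw -gw' !encodeE // same_bin.
move=> /ffunP Vww'; apply/ffunP => t; apply/ffunP => i.
have := congr1 (fun M : 'cV_n => M t ord0) (Vww' i); rewrite !ffunE !mxE.
by case: (w t i); case: (w' t i).
Qed.

Lemma success_bound (n m : nat) (B : 'M['F_2]_(m, n))
  (g : {ffun 'I_r -> 'cV['F_2]_m} -> {ffun 'I_r -> 'cV['F_2]_n}) (t a : R) :
  0 < t -> 1 < a ->
  prob (prob_n p) (fun w => g (encode B w) == all_Vn w) <=
  t * 2 ^ m + Rpower t (1 - a) * (\big[Rplus/R0]_v rpow (p v) a) ^ n.
Proof.
move=> t0 a1; have [Pn0 _] := prob_n_distr n p_distr.
rewrite /prob; apply: Rle_trans (sumR_le (fun w _ => mass_split (Pn0 w) t0 a1)) _.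
rewrite big_split /=; apply: Rplus_le_compat.
  rewrite -big_distrr /=; apply: Rmult_le_compat_l; first lra.
  rewrite /indR -big_mkcondr /= (eq_bigl (fun w => w \in decodable B g)) //.
  rewrite sumR_const Rmult_1_r -[2]/(INR 2) -INR_expn; apply: le_INR; apply/leP.
  exact: card_decodable.
apply: (@Rle_trans _ (\big[Rplus/R0]_w (rpow (prob_n p w) a * Rpower t (1 - a)))).
  apply: sumR_le_sub => // w.
  by apply: Rmult_le_pos; [apply: rpow_ge0 | left; apply: exp_pos].
rewrite -big_distrl /= Rmult_comm -(sum_rpow_prod n) => [|v]; last by case: p_distr.
exact: Rle_refl.
Qed.

Lemma success_exponentially_small (Rt : R) : 0 <= Rt -> Rt < entropy p (Vi i0) ->
  exists e, 0 <= e < 1 /\ forall (n : nat) (B : 'M['F_2]_(ceil_nat (INR n * Rt), n))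
    (dec : {ffun 'I_r -> 'cV['F_2]_(ceil_nat (INR n * Rt))} -> {ffun 'I_r -> 'cV['F_2]_n}),
    prob (prob_n p) (fun w => dec (encode B w) == all_Vn w) <= 3 * e ^ n.
Proof.
move=> Rt0 Rt_lt; have H_le := entropy_le_shannon (Vi i0) p_distr.
set H := entropy p (Vi i0) in Rt_lt H_le; set g := (Rt + H) / 2.
have [a [a1 moment_small]] := renyi_above (g := g) p_distr ltac:(rewrite /g; lra).
set A := Rpower 2 ((1 - a) * g) in moment_small; have A0 : 0 < A by apply: exp_pos.
set c := \big[Rplus/R0]_v rpow (p v) a / A.
have c_ok : 0 <= c < 1.
  split; first by apply: Rle_mult_inv_pos => //; apply: sumR_ge0 => v _; apply: rpow_ge0.
  by apply: (Rmult_lt_reg_r A) => //; rewrite /c /Rdiv Rmult_assoc Rinv_l; lra.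
set d := Rpower 2 (Rt - g).
have d_ok : 0 < d < 1.
  split; first exact: exp_pos.
  rewrite /d -(Rpower_O 2); last lra.
  by apply: Rpower_lt; rewrite /g; lra.
exists (Rmax c d); split; first by split; [apply: Rle_trans (Rmax_r _ _); lra | apply: Rmax_lub_lt; lra].
move=> n B dec; set m := ceil_nat (INR n * Rt) in B dec *.
have [_ m_lt] := ceil_nat_spec (Rmult_le_pos _ _ (pos_INR n) Rt0); rewrite -/m in m_lt.
set t := Rpower 2 (- (INR n * g)).
have := success_bound B dec (exp_pos _ : 0 < t) a1; rewrite chernoff_rate -/A -/c.
have bins : t * 2 ^ m <= 2 * d ^ n.
  have two_m : 2 ^ m = Rpower 2 (INR m) by rewrite Rpower_pow //; lra.
  have two : 2 = Rpower 2 1 by rewrite Rpower_1 //; lra.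
  rewrite /t /d pow_Rpower2 two_m [X in _ <= X * _]two -!Rpower_plus.
  by apply: Rle_Rpower; lra.
have : c ^ n <= Rmax c d ^ n by apply: pow_incr; split; [lra | apply: Rmax_l].
have : d ^ n <= Rmax c d ^ n by apply: pow_incr; split; [lra | apply: Rmax_r].
lra.
Qed.

Theorem converse (Rt : R) : achievable_sc p Rt -> entropy p (Vi i0) <= Rt.
Proof.
move=> [Rt0 achieve]; apply: Rnot_lt_le => Rt_lt.
have [e [[e0 e1] success_small]] := success_exponentially_small Rt0 Rt_lt.
have [N' small] := pow_lt_1_zero e ltac:(rewrite Rabs_pos_eq; lra) (1 / 6) ltac:(lra).
have [N good] := achieve (1 / 2) ltac:(lra).
set n := maxn N N'; have [B [dec err_small]] := good n (leq_maxl _ _).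
have := small n (leP (leq_maxr N N')); rewrite Rabs_pos_eq; last by apply: pow_le.
have := success_small n B dec.
have := prob_compl (prob_n_distr n p_distr) (fun w => dec (encode B w) == all_Vn w).
by rewrite /error_prob in err_small; lra.
Qed.

End IdenticalSources.

(** * The Slepian–Wolf symmetric rate and the infimum of achievable rates *)

Lemma VS_setT (r : nat) (w : Omega r) : VS [set: 'I_r] w = w.
Proof. by apply/ffunP => i; rewrite ffunE in_setT. Qed.

Lemma cond_entropy_full (r : nat) (p : Omega r -> R) : is_distr p ->
  cond_entropy p (VS [set: 'I_r]) (VS (~: [set: 'I_r])) = shannon p.
Proof.
move=> p_distr; rewrite (cond_entropy_const _ p_distr (y0 := [ffun=> false])).
  by apply: entropy_inj => // w w' _ _; rewrite !VS_setT.
by move=> w; apply/ffunP => i; rewrite !ffunE setCT in_set0.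
Qed.

Lemma R_SW_full_term (r : nat) (p : Omega r -> R) : (1 <= r)%nat -> is_distr p ->
  shannon p / INR r <= R_SW p.
Proof.
move=> r1 p_distr; have setT_neq0 : [set: 'I_r] != set0.
  by apply/set0Pn; exists (Ordinal r1); rewrite in_setT.
have := le_bigmax (P := fun S : {set 'I_r} => S != set0)
  (fun S : {set 'I_r} => cond_entropy p (VS S) (VS (~: S)) / INR #|S|) setT_neq0.
by rewrite cond_entropy_full // cardsT card_ord.
Qed.

Lemma shannon_le_R_SW (r : nat) (p : Omega r -> R) : (1 <= r)%nat -> is_distr p ->
  shannon p <= INR r * R_SW p.
Proof.
move=> r1 p_distr; have r0 : 0 < INR r by apply: lt_0_INR; apply/leP.
have -> : shannon p = INR r * (shannon p / INR r) by field; lra.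
by apply: Rmult_le_compat_l; [lra | apply: R_SW_full_term].
Qed.

Lemma max_entropy_le_shannon (r : nat) (p : Omega r -> R) : is_distr p ->
  \big[Rmax/R0]_i entropy p (Vi i) <= shannon p.
Proof.
move=> p_distr; apply: bigmax_le => [|i _]; first exact: shannon_ge0.
exact: entropy_le_shannon.
Qed.

Lemma inf_le_max_entropy (r : nat) (p : Omega r -> R) (Rsc : R) : is_distr p ->
  is_inf (achievable_sc p) Rsc -> Rsc <= \big[Rmax/R0]_i entropy p (Vi i).
Proof.
move=> p_distr [Rsc_lb _]; apply: Rnot_lt_le => lt_Rsc.
have := Rsc_lb _ (achievability p_distr (_ : _ < (Rsc + \big[Rmax/R0]_i entropy p (Vi i)) / 2)).
by move/(_ ltac:(lra)); lra.
Qed.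

Lemma inf_exists (r : nat) (p : Omega r -> R) : is_distr p ->
  exists Rsc, is_inf (achievable_sc p) Rsc.
Proof.
move=> p_distr; set Hmax := \big[Rmax/R0]_i entropy p (Vi i).
have Hmax_ach : achievable_sc p (Hmax + 1) by apply: achievability => //; rewrite /Hmax; lra.
pose lower m := forall x, achievable_sc p x -> m <= x.
have lower_bounded : bound lower by exists (Hmax + 1) => m; apply.
have lower_ne : exists m, lower m by exists 0 => x [].
have [Rsc [Rsc_ub Rsc_least]] := completeness lower lower_bounded lower_ne.
exists Rsc; split => [x x_ach | m m_lower]; last exact: Rsc_ub.
by apply: Rsc_least => m; apply.
Qed.

Section IdenticalExample.
Variables (r : nat) (p : Omega r -> R) (i0 : 'I_r).
Hypothesis p_distr : is_distr p.
Hypothesis p_diag : forall v : Omega r, 0 < p v -> forall i j, v i = v j.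

Lemma diag_eq (w w' : Omega r) (j : 'I_r) : 0 < p w -> 0 < p w' -> w j = w' j -> w = w'.
Proof. by move=> pw pw' wj; apply/ffunP => i; rewrite (p_diag pw i j) (p_diag pw' i j). Qed.

Lemma shannon_diag : shannon p = entropy p (Vi i0).
Proof. by symmetry; apply: entropy_inj => // w w' pw pw'; apply: diag_eq. Qed.

Lemma cond_entropy_diag (S : {set 'I_r}) : S != [set: 'I_r] ->
  cond_entropy p (VS S) (VS (~: S)) = 0.
Proof.
move=> S_proper; have [j jS] : exists j, j \in ~: S.
  by apply/set0Pn; apply: contra S_proper => /eqP S0; rewrite -setC0 -S0 setCK.
apply: cond_entropy_determined => // w w' pw pw' /ffunP /(_ j).
by rewrite !ffunE jS => /(diag_eq pw pw') ->.
Qed.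

Lemma R_SW_diag : (1 <= r)%nat -> R_SW p = entropy p (Vi i0) / INR r.
Proof.
move=> r1; apply: Rle_antisym; last by rewrite -shannon_diag; apply: R_SW_full_term.
have r0 : 0 < INR r by apply: lt_0_INR; apply/leP.
apply: bigmax_le => [|S _].
  by apply: Rle_mult_inv_pos => //; apply: entropy_ge0.
case: (eqVneq S [set: 'I_r]) => [-> | S_proper].
  by rewrite cond_entropy_full // shannon_diag cardsT card_ord; apply: Rle_refl.
rewrite cond_entropy_diag // /Rdiv Rmult_0_l.
by apply: Rle_mult_inv_pos => //; apply: entropy_ge0.
Qed.

Lemma inf_diag (Rsc : R) : is_inf (achievable_sc p) Rsc -> Rsc = entropy p (Vi i0).
Proof.
move=> Rsc_inf; apply: Rle_antisym.
  apply: Rle_trans (inf_le_max_entropy p_distr Rsc_inf) _.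
  by rewrite -shannon_diag; apply: max_entropy_le_shannon.
by case: Rsc_inf => _; apply => x; apply: converse.
Qed.

End IdenticalExample.

(** * An example: [V_1 = ... = V_r] a fair coin *)

Definition const_outcome (r : nat) (b : bool) : Omega r := [ffun=> b].

Definition fair_diag (r : nat) (v : Omega r) : R :=
  if (v == const_outcome r true) || (v == const_outcome r false) then 1 / 2 else 0.

Section FairDiagonal.
Variables (r : nat) (i0 : 'I_r).

Lemma const_outcome_neq (b : bool) : const_outcome r b != const_outcome r (~~ b).
Proof. by apply/eqP => /ffunP /(_ i0); rewrite !ffunE; case: b. Qed.

Lemma fair_diag_const (b : bool) : fair_diag (const_outcome r b) = 1 / 2.
Proof. by rewrite /fair_diag; case: b; rewrite eqxx ?orbT. Qed.

Lemma fair_diag_distr : is_distr (@fair_diag r).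
Proof.
split=> [v | ]; first by rewrite /fair_diag; case: ifP => _; lra.
rewrite (bigD1 (const_outcome r true)) //= (bigD1 (const_outcome r false)) /=; last first.
  exact: (const_outcome_neq false).
rewrite big1 => [|v /andP [v_true v_false]]; first by rewrite !fair_diag_const; lra.
by rewrite /fair_diag (negbTE v_true) (negbTE v_false).
Qed.

Lemma fair_diag_diag (v : Omega r) : 0 < fair_diag v -> forall i j, v i = v j.
Proof.
rewrite /fair_diag; case: ifP => [/orP [] /eqP -> _ i j | _]; rewrite ?ffunE //; lra.
Qed.

Lemma fair_diag_marginal (b : bool) : prob (@fair_diag r) (fun v => Vi i0 v == b) = 1 / 2.
Proof.
rewrite /prob (bigD1 (const_outcome r b)) /=; last by rewrite /Vi ffunE.
rewrite big1 => [|v /andP [/eqP v_b v_ne]]; first by rewrite fair_diag_const; lra.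
have v_ne' : v != const_outcome r (~~ b).
  by apply/eqP => v_nb; move: v_b; rewrite v_nb /Vi ffunE; case: (b).
by clear v_b; rewrite /fair_diag; case: b v_ne v_ne' => /= /negbTE -> /negbTE ->.
Qed.

Lemma fair_diag_entropy : entropy (@fair_diag r) (Vi i0) = 1.
Proof.
rewrite /entropy big_bool /= !fair_diag_marginal /xlog2.
case: Rlt_dec => [? | ?] /=; last lra.
rewrite /log2 /Rdiv Rmult_1_l ln_Rinv; last lra.
by field; have := ln2_pos; lra.
Qed.

End FairDiagonal.

Theorem claim2 :
  (* (i) existence of a strict gap, for every r >= 2 *)
  (forall r : nat, (2 <= r)%nat ->
     exists p : Omega r -> R, is_distr p /\
       exists Rsc : R, is_inf (achievable_sc p) Rsc /\ Rsc > R_SW p) /\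
  (* (i) the example: V_1 = ... = V_r almost surely, H(V_1) > 0 *)
  (forall (r : nat) (Hr : (2 <= r)%nat) (p : Omega r -> R),
     is_distr p ->
     (forall v : Omega r, 0 < p v -> forall i j : 'I_r, v i = v j) ->
     0 < entropy p (Vi (Ordinal (ltn_trans (ltnSn 0) Hr))) ->
     R_SW p = entropy p (Vi (Ordinal (ltn_trans (ltnSn 0) Hr))) / INR r /\
     (forall Rsc, is_inf (achievable_sc p) Rsc ->
        Rsc = entropy p (Vi (Ordinal (ltn_trans (ltnSn 0) Hr))))) /\
  (* (ii) the upper bound *)
  (forall (r : nat) (Hr : (1 <= r)%nat) (p : Omega r -> R),
     is_distr p ->
     forall Rsc, is_inf (achievable_sc p) Rsc ->
       Rsc <= Rmin (INR r * R_SW p)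
                   (\big[Rmax/R0]_(i : 'I_r) entropy p (Vi i))).
Proof.
have diagonal (r : nat) (Hr : (2 <= r)%nat) (p : Omega r -> R) :
    is_distr p -> (forall v : Omega r, 0 < p v -> forall i j : 'I_r, v i = v j) ->
    R_SW p = entropy p (Vi (Ordinal (ltn_trans (ltnSn 0) Hr))) / INR r /\
    (forall Rsc, is_inf (achievable_sc p) Rsc ->
       Rsc = entropy p (Vi (Ordinal (ltn_trans (ltnSn 0) Hr)))).
  move=> p_distr p_diag; split; last by move=> Rsc; apply: inf_diag.
  by apply: R_SW_diag => //; apply: ltnW.
split; [| split].
- move=> r Hr; set i0 := Ordinal (ltn_trans (ltnSn 0) Hr).
  have p_distr := fair_diag_distr i0.
  have [Rsc Rsc_inf] := inf_exists p_distr.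
  exists (@fair_diag r); split => //; exists Rsc; split => //.
  have [-> Rsc_eq] := diagonal r Hr _ p_distr (@fair_diag_diag r).
  have r2 : 2 <= INR r by apply: (le_INR 2); apply/leP.
  rewrite (Rsc_eq _ Rsc_inf) -/i0 fair_diag_entropy /Rdiv Rmult_1_l.
  by rewrite -Rinv_1; apply: Rinv_lt_contravar; lra.
- by move=> r Hr p p_distr p_diag _; apply: diagonal.
- move=> r Hr p p_distr Rsc Rsc_inf; have Rsc_le := inf_le_max_entropy p_distr Rsc_inf.
  apply: Rmin_glb => //; apply: Rle_trans Rsc_le _.
  apply: Rle_trans (max_entropy_le_shannon p_distr) _.
  exact: shannon_le_R_SW.
Qed.
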